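(* For every positive integer $t$, setting $n=3\cdot 2^{2t-1}+1$, there exists an equiangular set of $\frac{2}{9}(n-1)(n+2)$ lines in $\mathbb{R}^n$.
   Context: A set of lines in $\mathbb{R}^n$ (or $\mathbb{C}^n$) spanned by unit vectors $v_1,\dots,v_r$ is equiangular if there is a constant $c$ such that $|\langle v_i,v_j\rangle|=c$ for all $1\le i<j\le r$. *)

From Stdlib Require Import Reals Lra Lia Arith.
Open Scope R_scope.

(* A vector in R^n is represented by its coordinate function on indices k < n. *)
Definition inner (n : nat) (x y : nat -> R) : R :=
  match n with
  | O => 0
  | S m => sum_f_R0 (fun k => x k * y k) m
  end.

Definition same_line (n : nat) (x y : nat -> R) : Prop :=
  exists a : R, forall k, (k < n)%nat -> x k = a * y k.

Definition equiangular_lines (n r : nat) (v : nat -> nat -> R) : Prop :=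
  (forall i, (i < r)%nat -> inner n (v i) (v i) = 1) /\
  (forall i j, (i < r)%nat -> (j < r)%nat -> i <> j -> ~ same_line n (v i) (v j)) /\
  exists c : R, forall i j, (i < r)%nat -> (j < r)%nat -> i <> j ->
    Rabs (inner n (v i) (v j)) = c.

From Stdlib Require Import Reals Lra Lia Arith.

(* Equiangular lines from Kerdock sets.

   Let k = 2t - 1 (odd), F = GF(2^k) and V = F_2 x F, an F_2-space with
   N = 2^(k+1) = s^2 elements (s = 2^t).  For r in F and a in V, qform r a
   is an F_2-valued quadratic form on V built from the absolute trace Tr and
   h0 z = sum_(1 <= d <= (k-1)/2) Tr (z^(2^d+1)).  Two forms with the same r
   differ by a nonzero linear form, so their character sum vanishes; two forms
   with different r differ by a form of full rank, so their character sum has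
   square N.  In R^(N + 1 + 2^k) take the N vectors q e_b + beta e_* (b in V)
   and the 2^k N vectors p sum_v (-1)^(qform r a v) e_v + beta e_r; for suitable
   weights p, q, beta these are unit vectors whose pairwise inner products are
   +-s/(N+s).  This gives N (2^k + 1) = 2/9 (n-1)(n+2) lines with n = 3 2^k + 1. *)

From HB Require Import structures.
From mathcomp Require all_boot all_order all_algebra all_field.
From mathcomp Require ring lra zify Rstruct.

Module KerdockLines.
Import all_boot all_order all_algebra all_field ring lra zify Rstruct.
Local Set Implicit Arguments.
Local Unset Strict Implicit.
Local Unset Printing Implicit Defensive.
Import Order.TTheory GRing.Theory Num.Theory.
Local Open Scope ring_scope.

Lemma sum_fold (V : nmodType) n m (f : nat -> V) : n = (m + m).+1 ->
  \sum_(e < n) f e = f 0%N + \sum_(1 <= d < m.+1) (f d + f (n - d)%N).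
Proof.
move->.
rewrite big_ord_recl big_split /= -(big_mkord xpredT (fun i => f (bump 0 i))).
rewrite (big_cat_nat _ (leq_addr m m)) //=; congr (_ + (_ + _)).
  by rewrite big_add1 /=.
rewrite big_nat_rev /= big_add1 /= -{1}[m]add0n big_addn addKn.
by apply: eq_big_nat => d /andP[_ hd]; congr f; rewrite /bump; lia.
Qed.

Section CharacteristicTwo.
Variable F : fieldType.
Hypothesis char2 : 2%N \in [pchar F].

Let two0 : 2%:R = 0 :> F. Proof. exact: pcharf0 char2. Qed.

Lemma frobeniusD (x y : F) i : (x + y) ^+ (2 ^ i) = x ^+ (2 ^ i) + y ^+ (2 ^ i).
Proof. by apply: exprDn_pchar; rewrite pnatX pnatE //= char2. Qed.

Lemma char2_eq (x y : F) : x + y = 0 -> x = y.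
Proof. by move=> xy0; rewrite -[y]add0r -xy0 addrK_pchar2. Qed.

(* The elements 0 and 1 of the prime field F_2, described as the idempotents
   of F; the F_2-valued functions below take their values among them. *)
Definition bit (e : F) := e ^+ 2 = e.

Lemma bitP e : bit e -> e = 0 \/ e = 1.
Proof.
move=> ee; have : e * (e - 1) == 0 by rewrite mulrBr mulr1 -expr2 ee subrr.
by rewrite mulf_eq0 subr_eq0 => /orP[/eqP-> | /eqP->]; [left | right].
Qed.

Lemma bit0 : bit 0. Proof. by rewrite /bit expr0n. Qed.
Lemma bit1 : bit 1. Proof. by rewrite /bit expr1n. Qed.
Lemma bitD a b : bit a -> bit b -> bit (a + b).
Proof. by rewrite /bit -[2%N]/(2 ^ 1)%N frobeniusD => -> ->. Qed.
Lemma bitM a b : bit a -> bit b -> bit (a * b).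
Proof. by rewrite /bit exprMn => -> ->. Qed.
Lemma bit_nat (b : bool) : bit b%:R.
Proof. by case: b; [exact: bit1 | exact: bit0]. Qed.

Lemma natr_addb (a b : bool) : (a (+) b)%:R = a%:R + b%:R :> F.
Proof. by case: a; case: b; rewrite /= ?addr0 ?add0r // -natrD two0. Qed.

End CharacteristicTwo.

Section CharacterSums.
Variables (F : fieldType) (K : numDomainType) (V : finZmodType).
Hypothesis char2 : 2%N \in [pchar F].

Definition chi (e : F) : K := if e == 0 then 1 else -1.

Lemma chi0 : chi 0 = 1. Proof. by rewrite /chi eqxx. Qed.
Lemma chi1 : chi 1 = -1. Proof. by rewrite /chi oner_eq0. Qed.

Lemma chiD e e' : bit e -> bit e' -> chi (e + e') = chi e * chi e'.
Proof.
case/bitP=> ->; case/bitP=> ->; rewrite ?addr0 ?add0r ?chi0 ?mul1r ?mulr1 //.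
by rewrite -[1 + 1]/(2%:R) (pcharf0 char2) chi0 chi1 mulrNN mulr1.
Qed.

Lemma sum_chi_linear (g : V -> F) : (forall v, bit (g v)) ->
  {morph g : x y / x + y} -> (exists v0, g v0 = 1) -> \sum_v chi (g v) = 0.
Proof.
move=> g_bit gD [v0 gv0]; set S := \sum_v _.
have SN : S = - S.
  rewrite {1}/S (reindex_inj (addIr v0)) /= -sumrN; apply: eq_bigr => v _.
  by rewrite gD chiD // gv0 chi1 mulrN1.
by apply/eqP; rewrite -eqNr {2}SN.
Qed.

Definition polar (g : V -> F) (u v : V) : F := g v + g (v + u) + g u.

Lemma sum_chi_quadratic (g : V -> F) : (forall v, bit (g v)) -> g 0 = 0 ->
  (forall u, u != 0 -> {morph polar g u : x y / x + y} /\ exists v, polar g u v = 1) ->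
  (\sum_v chi (g v)) ^+ 2 = #|V|%:R.
Proof.
move=> g_bit g0 nondeg.
have pairs v u : chi (g v) * chi (g (v + u)) = chi (polar g u v) * chi (g u).
  have polar_bit : bit (polar g u v) by apply: bitD => //; exact: bitD.
  by rewrite -!chiD // /polar addrK_pchar2.
rewrite expr2 mulr_suml (eq_bigr (fun v => \sum_u chi (polar g u v) * chi (g u))); last first.
  move=> v _; rewrite mulr_sumr (reindex_inj (addrI v)) /=.
  by apply: eq_bigr => u _; rewrite pairs.
rewrite exchange_big (bigD1 0) //= [X in _ + X]big1 => [|u u_neq0]; last first.
  have [polarD polar1] := nondeg u u_neq0.
  rewrite -mulr_suml sum_chi_linear ?mul0r // => v.
  by rewrite /polar; apply: bitD => //; exact: bitD.
rewrite addr0 g0 chi0 (eq_bigr (fun _ => 1)) ?sumr_const // => v _.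
by rewrite /polar g0 !addr0 (addrr_pchar2 char2) chi0 mulr1.
Qed.

End CharacterSums.
Arguments chi {F K} e.

Section Kerdock.
Variables (F : finFieldType) (k : nat).
Hypothesis char2 : 2%N \in [pchar F].
Hypothesis cardF : #|F| = (2 ^ k)%N.

Let two0 : 2%:R = 0 :> F. Proof. exact: pcharf0 char2. Qed.

Definition Tr (x : F) : F := \sum_(i < k) x ^+ (2 ^ i).

Lemma TrD x y : Tr (x + y) = Tr x + Tr y.
Proof. by rewrite -big_split; apply: eq_bigr => i _; rewrite frobeniusD. Qed.

Lemma Tr0 : Tr 0 = 0.
Proof. by rewrite /Tr big1 // => i _; rewrite expr0n expn_eq0. Qed.

(* Tr is invariant under the Frobenius automorphism x |-> x^2, whose k-th
   iterate is the identity. *)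
Lemma Tr_sq x : Tr (x ^+ 2) = Tr x.
Proof.
pose f (i : nat) := x ^+ (2 ^ i).
have : \sum_(i < k.+1) f i = \sum_(i < k.+1) f i by [].
rewrite {1}big_ord_recl big_ord_recr /= [f 0%N]/f [f k]/f -cardF expf_card.
rewrite expn0 expr1 addrC => /addrI shift.
rewrite /Tr -[RHS]shift; apply: eq_bigr => i _.
by rewrite /f /bump add1n -exprM -expnS.
Qed.

Lemma Tr_frobenius x j : Tr (x ^+ (2 ^ j)) = Tr x.
Proof. by elim: j => [|j IH]; rewrite ?expr1 // expnSr exprM Tr_sq. Qed.

(* Squaring commutes with Tr, so Tr takes values in F_2. *)
Lemma Tr_bit x : bit (Tr x).
Proof.
rewrite /bit -{2}(Tr_sq x) /Tr.
rewrite (big_morph (fun y : F => y ^+ 2) (fun a b => frobeniusD char2 a b 1) (expr0n _ _)).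
by apply: eq_bigr => i _; rewrite exprAC.
Qed.

Lemma TrZ e x : bit e -> Tr (e * x) = e * Tr x.
Proof. by case/bitP=> ->; rewrite ?mul0r ?Tr0 ?mul1r. Qed.

Hypothesis k_odd : odd k.

Lemma Tr1 : Tr 1 = 1.
Proof.
rewrite /Tr (eq_bigr (fun _ => 1)) => [|i _]; last by rewrite expr1n.
rewrite sumr_const card_ord -[k]odd_double_half k_odd -mul2n.
by rewrite mulrnDr mulrnA -[1 *+ 2]/(2%:R) two0 mul0rn addr0.
Qed.

Lemma Tr_bit_id e : bit e -> Tr e = e.
Proof. by move=> be; rewrite -[e in Tr e]mulr1 TrZ // Tr1 mulr1. Qed.

Lemma Tr_nondegenerate z : (forall x, Tr (x * z) = 0) -> z = 0.
Proof.
move=> Trz0; apply/eqP; apply: contraLR (oner_neq0 F) => z_neq0.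
by rewrite negbK -Tr1 -(mulVf z_neq0) Trz0.
Qed.

Lemma Tr_mul z w : Tr z * Tr w = \sum_(e < k) Tr (z * w ^+ (2 ^ e)).
Proof.
rewrite [Tr z]/Tr mulr_suml [RHS]exchange_big /=; apply: eq_bigr => i _.
rewrite -(Tr_frobenius w i) mulr_sumr; apply: eq_bigr => e _.
by rewrite exprMn -!exprM mulnC.
Qed.

(* Applying x |-> x^(2^(k-d)) moves the twist from z to w. *)
Lemma Tr_twist_swap z w d : (d <= k)%N ->
  Tr (w * z ^+ (2 ^ d)) = Tr (z * w ^+ (2 ^ (k - d))).
Proof.
move=> le_dk; rewrite -(Tr_frobenius _ (k - d)) exprMn -exprM -expnD subnKC //.
by rewrite -cardF expf_card mulrC.
Qed.

Definition h0 (z : F) : F := \sum_(1 <= d < k./2.+1) Tr (z * z ^+ (2 ^ d)).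

Lemma h00 : h0 0 = 0.
Proof. by rewrite /h0 big1 // => d _; rewrite mul0r Tr0. Qed.

Lemma h0_bit z : bit (h0 z).
Proof.
by apply: big_ind => [|a b|d _]; [exact: bit0 | exact: bitD | exact: Tr_bit].
Qed.

Lemma h0D z w : h0 (z + w) = h0 z + h0 w + Tr z * Tr w + Tr (z * w).
Proof.
have k_eq : k = (k./2 + k./2).+1 by rewrite -{1}[k]odd_double_half k_odd addnn.
have cross : h0 (z + w) = h0 z + h0 w +
    \sum_(1 <= d < k./2.+1) (Tr (z * w ^+ (2 ^ d)) + Tr (z * w ^+ (2 ^ (k - d)))).
  rewrite /h0 -!big_split; apply: eq_big_nat => d /andP[_ le_dm] /=.
  rewrite -Tr_twist_swap; last by rewrite k_eq; lia.
  by rewrite frobeniusD // -!TrD; congr Tr; ring.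
rewrite cross Tr_mul (sum_fold (fun e => Tr (z * w ^+ (2 ^ e))) k_eq).
by rewrite expn0 expr1; ring: two0.
Qed.

Definition space := (bool * F)%type.
HB.instance Definition _ := GRing.Zmodule.on space.
HB.instance Definition _ := Finite.on space.
Local Notation V := space.

Lemma card_space : #|{: V}| = (2 ^ k.+1)%N.
Proof. by rewrite card_prod card_bool cardF expnS. Qed.

Lemma space_addK (a b : V) : a + b = 0 -> a = b.
Proof.
case: a b => [α x] [β y] [/= αβ xy]; congr pair; last exact: char2_eq.
by move: αβ; case: α; case: β.
Qed.

Definition pairing (a v : V) : F := Tr (a.2 * v.2) + (a.1 && v.1)%:R.

Lemma pairingC a v : pairing a v = pairing v a.
Proof. by rewrite /pairing mulrC andbC. Qed.

Lemma pairingD a : {morph pairing a : v w / v + w}.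
Proof.
case: a => α x [ξ y] [η z]; rewrite /pairing /= mulrDr TrD.
by rewrite -[ξ + η]/(ξ (+) η) andb_addr natr_addb //; ring.
Qed.

Lemma pairing_bit a v : bit (pairing a v).
Proof. by apply: bitD => //; [exact: Tr_bit | exact: bit_nat]. Qed.

Lemma pairing_nondegenerate a : a != 0 -> exists v, pairing a v = 1.
Proof.
case: a => α x a_neq0; have [x0 | x_neq0] := eqVneq x 0; last first.
  by exists (false, x^-1); rewrite /pairing /= mulfV // Tr1 andbF addr0.
exists (true, 0); rewrite /pairing /= mulr0 Tr0 add0r andbT.
case: α a_neq0 => //; rewrite x0 => /eqP neq; exfalso; apply: neq; reflexivity.
Qed.

Definition qform (r : F) (a v : V) : F :=
  h0 (r * v.2) + v.1%:R * Tr (r * v.2) + pairing a v.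

Definition bilin (r : F) (v u : V) : F :=
  Tr (r * v.2) * Tr (r * u.2) + Tr (r * v.2 * (r * u.2))
  + v.1%:R * Tr (r * u.2) + u.1%:R * Tr (r * v.2).

Lemma qform_bit r a v : bit (qform r a v).
Proof.
apply: bitD => //; last exact: pairing_bit.
apply: bitD => //; first exact: h0_bit.
by apply: bitM => //; [exact: bit_nat | exact: Tr_bit].
Qed.

Lemma qform0 r a : qform r a 0 = 0.
Proof. by rewrite /qform /pairing /= !mulr0 h00 Tr0 mul0r andbF !add0r. Qed.

Lemma qform_polar r a u v : polar (qform r a) u v = bilin r v u.
Proof.
rewrite /polar /qform pairingD.
case: v u => [ξ x] [η y]; rewrite /bilin /= mulrDr h0D TrD natr_addb //.
ring: two0.
Qed.

Lemma bilinD r u : {morph bilin r ^~ u : v w / v + w}.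
Proof.
case=> [ξ x] [η y]; rewrite /bilin /= natr_addb // !mulrDr !mulrDl !TrD.
ring.
Qed.

Lemma bilin_bit r v u : bit (bilin r v u).
Proof.
by do !first [exact: Tr_bit | exact: bit_nat | apply: bitD => // | apply: bitM].
Qed.

Lemma bilin_radical r r' u : r != r' ->
  (forall v, bilin r v u + bilin r' v u = 0) -> u = 0.
Proof.
case: u => [η y] r_neq rad; set d := r + r'.
have d_neq0 : d != 0 := contra_neq (@char2_eq _ char2 r r') r_neq.
(* Testing against v = (1, 0): both traces Tr (r y), Tr (r' y) equal some τ. *)
have [τ rτ r'τ] : exists2 τ, Tr (r * y) = τ & Tr (r' * y) = τ.
  exists (Tr (r * y)) => //; apply/esym/(char2_eq char2); have := rad (true, 0).
  by rewrite /bilin /= !(mulr0, mul0r, Tr0, mul1r, addr0, add0r).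
have τ_bit : bit τ by rewrite -rτ; exact: Tr_bit.
(* Testing against v = (0, x): a vector orthogonal to all x for the trace form. *)
have orth x : Tr (x * (τ * d + d ^+ 2 * y + η%:R * d)) = 0.
  rewrite -(rad (false, x)) /bilin /= !(mul0r, addr0) rτ r'τ.
  rewrite (_ : x * _ = τ * (r * x) + r * x * (r * y) + η%:R * (r * x) +
                       (τ * (r' * x) + r' * x * (r' * y) + η%:R * (r' * x))).
    by rewrite !TrD !(TrZ _ τ_bit) !(TrZ _ (bit_nat F η)); ring.
  by rewrite /d; ring: two0.
have dy : d * y = τ + η%:R.
  apply: (mulfI d_neq0); apply: (char2_eq char2).
  by rewrite -(Tr_nondegenerate orth); ring: two0.
(* Taking traces in d y = τ + η: the left side gives Tr (r y) + Tr (r' y) = 0. *)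
have τη0 : τ + η%:R = 0.
  have τη_bit : bit (τ + η%:R) by apply: bitD => //; exact: bit_nat.
  by rewrite -(Tr_bit_id τη_bit) -dy /d mulrDl TrD rτ r'τ (addrr_pchar2 char2).
have y0 : y = 0 by apply/eqP; rewrite -(mulrI_eq0 _ (mulfI d_neq0)) dy τη0.
have η0 : η = false.
  apply/negbTE/negP => η1; move: τη0.
  by rewrite -rτ y0 mulr0 Tr0 add0r η1 => /eqP; rewrite oner_eq0.
by rewrite y0 η0.
Qed.

(* Two forms with the same r differ by a nonzero linear form. *)
Lemma sum_chi_same (K : numDomainType) r a a' : a != a' ->
  \sum_v chi (qform r a v + qform r a' v) = 0 :> K.
Proof.
move=> a_neq.
rewrite (eq_bigr (fun v => chi (pairing (a + a') v))) => [|v _]; last first.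
  by congr chi; rewrite pairingC pairingD !(pairingC v) /qform; ring: two0.
apply: sum_chi_linear => //; [exact: pairing_bit | exact: pairingD |].
by apply: pairing_nondegenerate; apply: contra_neq a_neq; exact: space_addK.
Qed.

(* Two forms with different r differ by a quadratic form of full rank. *)
Lemma sum_chi_distinct (K : numDomainType) r a r' a' : r != r' ->
  (\sum_v chi (qform r a v + qform r' a' v)) ^+ 2 = #|{: V}|%:R :> K.
Proof.
move=> r_neq; set g := fun v => qform r a v + qform r' a' v.
have polar_g u v : polar g u v = bilin r v u + bilin r' v u.
  by rewrite -(qform_polar r a) -(qform_polar r' a') /polar /g; ring.
apply: sum_chi_quadratic => // [v | | u u_neq0].
- by apply: bitD => //; exact: qform_bit.
- by rewrite /g !qform0 addr0.
split=> [v w | ]; first by rewrite !polar_g !bilinD; ring.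
case: (pickP (fun v => polar g u v == 1)) => [v /eqP pv | none]; first by exists v.
case/eqP: u_neq0; apply: (bilin_radical r_neq) => v; rewrite -polar_g.
have := none v.
have : bit (polar g u v) by rewrite polar_g; apply: bitD => //; exact: bilin_bit.
by case/bitP=> ->; rewrite ?eqxx.
Qed.

(* Coordinates are indexed by V, one extra point, and F;
   lines are indexed by V ("standard" lines) and by F x V ("Kerdock" lines):
     standard b : q e_b + beta e_*,
     Kerdock (r, a) : p sum_v chi (qform r a v) e_v + beta e_r,
   with weights chosen so that every inner product has absolute value
   cosine = s / (#|V| + s), where s = sqrt #|V|. *)
Variable K : rcfType.
Variable s : K.
Hypothesis s_sq : s * s = #|{: V}|%:R.
Hypothesis s_gt0 : 0 < s.

Local Notation N := (#|{: V}|%:R : K).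

Definition cosine : K := s / (N + s).
Definition p : K := Num.sqrt (N + s)^-1.
Definition q : K := s * p.
Definition beta : K := Num.sqrt cosine.

Let Ns_gt0 : 0 < N + s.
Proof. by rewrite -s_sq addr_gt0 // mulr_gt0. Qed.

Lemma p_sq : p * p = (N + s)^-1.
Proof. by rewrite -expr2 sqr_sqrtr // invr_ge0 ltW. Qed.

Lemma beta_sq : beta * beta = cosine.
Proof. by rewrite -expr2 sqr_sqrtr // divr_ge0 // ?ltW. Qed.

Lemma cosine_bounds : 0 <= cosine < 1.
Proof.
rewrite divr_ge0 ?ltW //= ltr_pdivrMr // mul1r -s_sq.
by have := mulr_gt0 s_gt0 s_gt0; lra.
Qed.

Lemma norm_standard : q * q + beta * beta = 1.
Proof.
rewrite beta_sq (_ : q * q = s * s * (p * p)) /q; last by ring.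
by rewrite p_sq s_sq /cosine; field; rewrite gt_eqF.
Qed.

Lemma norm_kerdock : p * p * N + beta * beta = 1.
Proof. by rewrite p_sq beta_sq /cosine; field; rewrite gt_eqF. Qed.

Lemma qp_cosine : q * p = cosine.
Proof. by rewrite /q -mulrA p_sq. Qed.

Lemma pps_cosine : p * p * s = cosine.
Proof. by rewrite p_sq mulrC. Qed.

Definition coord := (V + (unit + F))%type.
Definition line := (V + F * V)%type.

Definition frame (l : line) (c : coord) : K :=
  match l, c with
  | inl b, inl v => if v == b then q else 0
  | inl _, inr (inl _) => beta
  | inl _, inr (inr _) => 0
  | inr (r, a), inl v => p * chi (qform r a v)
  | inr _, inr (inl _) => 0
  | inr (r, a), inr (inr r') => if r' == r then beta else 0
  end.

Definition frame_inner (l l' : line) : K := \sum_c frame l c * frame l' c.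

Lemma sum_coord (f : coord -> K) :
  \sum_c f c = \sum_v f (inl v) + (f (inr (inl tt)) + \sum_r f (inr (inr r))).
Proof.
rewrite big_sumType; congr (_ + _); rewrite big_sumType; congr (_ + _).
by rewrite (big_pred1 tt) // => -[].
Qed.

Lemma frame_innerC l l' : frame_inner l l' = frame_inner l' l.
Proof. by apply: eq_bigr => c _; rewrite mulrC. Qed.

Lemma inner_standard b b' :
  frame_inner (inl b) (inl b') = (if b == b' then q * q else 0) + beta * beta.
Proof.
rewrite /frame_inner sum_coord /= (bigD1 b) //= eqxx.
rewrite [X in _ + X + _]big1 => [|v /negbTE->]; last by rewrite mul0r.
rewrite [X in _ + (_ + X)]big1 => [|r _]; last by rewrite mul0r.
by rewrite eq_sym !addr0; case: (b' == b); rewrite ?mulr0.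
Qed.

Lemma inner_mixed b r a :
  frame_inner (inl b) (inr (r, a)) = q * (p * chi (qform r a b)).
Proof.
rewrite /frame_inner sum_coord /= (bigD1 b) //= eqxx.
rewrite [X in _ + X + _]big1 => [|v /negbTE->]; last by rewrite mul0r.
by rewrite [X in _ + (_ + X)]big1 => [|r' _]; rewrite ?mul0r // mulr0 !addr0.
Qed.

Lemma inner_kerdock r a r' a' : frame_inner (inr (r, a)) (inr (r', a')) =
  p * p * \sum_v chi (qform r a v + qform r' a' v) + (if r == r' then cosine else 0).
Proof.
rewrite /frame_inner sum_coord /= mulr0 add0r mulr_sumr; congr (_ + _).
  apply: eq_bigr => v _.
  by rewrite (chiD K char2 (qform_bit r a v) (qform_bit r' a' v)); ring.
rewrite (bigD1 r) //= eqxx big1 => [|r'' /negbTE->]; last by rewrite mul0r.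
by rewrite eq_sym -beta_sq; case: (r' == r); rewrite ?mulr0 addr0.
Qed.

Lemma frame_unit l : frame_inner l l = 1.
Proof.
case: l => [b | [r a]]; first by rewrite inner_standard eqxx norm_standard.
rewrite inner_kerdock eqxx -beta_sq (eq_bigr (fun _ => 1)) => [|v _].
  by rewrite sumr_const norm_kerdock.
by rewrite (addrr_pchar2 char2) chi0.
Qed.

Lemma frame_equiangular l l' : l != l' -> `|frame_inner l l'| = cosine.
Proof.
have [cos_ge0 _] := andP cosine_bounds.
have chi_norm (e : F) : `|chi e : K| = 1 by rewrite /chi; case: (e == 0); rewrite ?normrN normr1.
have mixed b r a : `|frame_inner (inl b) (inr (r, a))| = cosine.
  by rewrite inner_mixed mulrA qp_cosine normrM chi_norm mulr1 ger0_norm.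
case: l l' => [b | [r a]] [b' | [r' a']] l_neq.
- rewrite inner_standard beta_sq ifN ?add0r ?ger0_norm //.
- exact: mixed.
- by rewrite frame_innerC mixed.
rewrite inner_kerdock; have [r_eq | r_neq] := eqVneq r r'.
  have a_neq : a != a' by apply: contraNneq l_neq => a_eq; rewrite r_eq a_eq.
  by rewrite -r_eq sum_chi_same // mulr0 add0r ger0_norm.
have sum_sq := sum_chi_distinct K a a' r_neq.
have sum_abs : `|\sum_v chi (qform r a v + qform r' a' v)| = s.
  apply/eqP; rewrite -(eqrXn2 (n := 2)) ?normr_ge0 ?ltW // real_normK ?num_real //.
  by rewrite sum_sq expr2 s_sq.
by rewrite addr0 normrM sum_abs ger0_norm ?pps_cosine // p_sq invr_ge0 ltW.
Qed.

End Kerdock.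
Lemma inner_sum n (x y : nat -> R) : inner n x y = \sum_(j < n) x j * y j.
Proof.
case: n => [|n]; first by rewrite big_ord0.
rewrite /inner; elim: n => [|n IH]; first by rewrite big_ord_recr big_ord0 /= add0r.
by rewrite big_ord_recr /= -IH.
Qed.

Lemma not_same_line n x y : inner n x x = 1 -> inner n y y = 1 ->
  `|inner n x y| < 1 -> ~ same_line n x y.
Proof.
move=> xx yy xy_lt1 [a xa].
have scale (f : nat -> R) : \sum_(j < n) x j * f j = a * \sum_(j < n) y j * f j.
  rewrite mulr_sumr; apply: eq_bigr => j _.
  by rewrite xa ?RmultE ?mulrA //; apply/ssrnat.ltP.
have xy_a : inner n x y = a by rewrite !inner_sum scale -inner_sum yy mulr1.
have a_sq : a * a = 1.
  have : inner n x x = a * inner n x y.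
    by rewrite !inner_sum scale; congr (_ * _); apply: eq_bigr => j _; exact: mulrC.
  by rewrite xx xy_a => ->.
move: xy_lt1; rewrite xy_a; have := normr_ge0 a.
have : `|a| * `|a| = 1 by rewrite -normrM a_sq normr1.
nra.
Qed.

Lemma sum_enum (T : finType) (t0 : T) (f : T -> R) :
  \sum_(t : T) f t = \sum_(j < #|T|) f (nth t0 (enum T) j).
Proof. by rewrite -(@big_enum _ _ _ _ predT) /= (big_nth t0) cardE big_mkord. Qed.

Lemma equiangular_of_frame (L C : finType) (l0 : L) (c0 : C)
    (vec : L -> C -> R) (c : R) :
  (forall l, \sum_x vec l x * vec l x = 1) ->
  (forall l l', l != l' -> `|\sum_x vec l x * vec l' x| = c) -> c < 1 ->
  equiangular_lines #|C| #|L| (fun i j => vec (nth l0 (enum L) i) (nth c0 (enum C) j)).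
Proof.
move=> unit equi c_lt1.
set v := fun i j => _.
have inner_v i i' : inner #|C| (v i) (v i') =
    \sum_x vec (nth l0 (enum L) i) x * vec (nth l0 (enum L) i') x.
  by rewrite inner_sum (sum_enum c0).
have nth_neq i i' : (i < #|L|)%coq_nat -> (i' < #|L|)%coq_nat -> i <> i' ->
    nth l0 (enum L) i != nth l0 (enum L) i'.
  move=> /ssrnat.ltP lt_i /ssrnat.ltP lt_i' /eqP.
  by rewrite nth_uniq ?enum_uniq -?cardE.
split; [|split].
- by move=> i _; rewrite inner_v unit.
- move=> i i' lt_i lt_i' neq; apply: not_same_line; rewrite ?inner_v ?unit //.
  by rewrite equi ?nth_neq.
- exists c => i i' lt_i lt_i' neq.
  by have := equi _ _ (nth_neq i i' lt_i lt_i' neq); rewrite -inner_v.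
Qed.

Lemma kerdock_equiangular k : odd k ->
  exists v, equiangular_lines (3 * 2 ^ k + 1) (2 * 2 ^ k * (2 ^ k + 1)) v.
Proof.
move=> k_odd; have k_gt0 : (0 < k)%N by case: k k_odd.
have [F char2 cardF] := pPrimePowerField (isT : prime 2) k_gt0.
set s : R := (2 ^ k.+1./2)%:R.
have s_sq : s * s = #|{: space F}|%:R.
  rewrite -natrM -expnD addnn (card_space cardF).
  by rewrite -[in RHS](odd_double_half k.+1) /= k_odd.
have s_gt0 : 0 < s by rewrite ltr0n expn_gt0.
have card_coord : #|{: coord F}| = (3 * 2 ^ k + 1)%N.
  by rewrite !card_sum card_unit (card_space cardF) cardF expnS; lia.
have card_line : #|{: line F}| = (2 * 2 ^ k * (2 ^ k + 1))%N.
  rewrite card_sum (card_space cardF) card_prod (card_space cardF) cardF.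
  by rewrite expnS; nia.
rewrite -card_coord -card_line.
have [_ cos_lt1] := andP (cosine_bounds s_sq s_gt0).
eexists; apply: (equiangular_of_frame (vec := frame k s) (inl 0) (inl 0) _ _ cos_lt1).
- by apply: frame_unit.
- by apply: frame_equiangular.
Qed.

Lemma pow_expn m n : Nat.pow m n = expn m n.
Proof. by elim: n => [|n IH] //=; rewrite expnS IH. Qed.

Lemma kerdock_equiangular_pow t : (1 <= t)%coq_nat ->
  exists v, equiangular_lines (3 * Nat.pow 2 (2 * t - 1) + 1)
    (2 * Nat.pow 2 (2 * t - 1) * (Nat.pow 2 (2 * t - 1) + 1)) v.
Proof.
move=> /ssrnat.leP t_gt0; rewrite pow_expn; apply: kerdock_equiangular.
have -> : (2 * t - 1 = (t.-1 * 2).+1)%N by lia.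
by rewrite /= oddM andbF.
Qed.

End KerdockLines.

Open Scope R_scope.

Theorem theorem2 : forall t : nat, (1 <= t)%nat ->
  let n := (3 * 2 ^ (2 * t - 1) + 1)%nat in
  exists (r : nat) (v : nat -> nat -> R),
    INR r = 2 / 9 * (INR n - 1) * (INR n + 2) /\
    equiangular_lines n r v.
Proof.
intros t ht n.
destruct (KerdockLines.kerdock_equiangular_pow ht) as [v hv].
exists (2 * 2 ^ (2 * t - 1) * (2 ^ (2 * t - 1) + 1))%nat, v.
split; [| exact hv].
unfold n; rewrite !mult_INR, !plus_INR, !mult_INR.
simpl (INR 1); simpl (INR 2); simpl (INR 3).
field.
Qed.
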